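(* Let $a>b\geq1$ be coprime integers, $p=a/b$, $\hat n\geq 1$ an integer, $N=(2^b+2)\hat n+2^{a-b}+2^b$, and let $g_0=\mathbf{1}_{(2^b+1)\hat n}\circ\mathbf{0}_{\hat n}\circ\mathbf{0}_{2^{a-b}}\circ\mathbf{1}_{2^b}$ and, for $i\in[2^{a-b}]$, $g_i=\mathbf{0}_{(2^b+2)\hat n}\circ\mathbf{0}_{i-1}\circ 1\circ\mathbf{0}_{2^{a-b}+2^b-i}$. Let $s^*\in\{0,1\}^N$ have zeros in all of its last $2^{a-b}+2^b$ positions. (1) If $\mathrm{hs}(s^*,\mathbf{0}_N)\subseteq[(2^b+1)\hat n]$ and $d(s^*,\mathbf{0}_N)=\hat n$, then $\sum_{i=0}^{2^{a-b}}d(s^*,g_i)^p=(2^a+2^{a-b})(\hat n+1)^p$. (2) Otherwise $\sum_{i=0}^{2^{a-b}}d(s^*,g_i)^p>(2^a+2^{a-b})(\hat n+1)^p$.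
   Context: $d$ denotes Hamming distance; $\mathrm{hs}(s,s')=\{j: s[j]\neq s'[j]\}$; $\mathbf{0}_\ell,\mathbf{1}_\ell$ are the all-zero/all-one strings of length $\ell$; $\circ$ is concatenation; $[t]=\{1,\dots,t\}$. *)

From Stdlib Require Import Reals List Arith Lia.
Import ListNotations.
Open Scope R_scope.

Fixpoint hamming (s t : list bool) : nat :=
  match s, t with
  | x :: s', y :: t' => ((if Bool.eqb x y then 0 else 1) + hamming s' t')%nat
  | _, _ => 0%nat
  end.

(* j (1-indexed) belongs to hs(s,t) = {j : s[j] <> t[j]} *)
Definition in_hs (s t : list bool) (j : nat) : Prop :=
  (1 <= j <= length s)%nat /\ nth (j - 1) s false <> nth (j - 1) t false.

Definition zeros (l : nat) : list bool := repeat false l.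
Definition ones (l : nat) : list bool := repeat true l.

Definition bigN (a b nh : nat) : nat := ((2 ^ b + 2) * nh + 2 ^ (a - b) + 2 ^ b)%nat.

Definition g0 (a b nh : nat) : list bool :=
  ones ((2 ^ b + 1) * nh) ++ zeros nh ++ zeros (2 ^ (a - b)) ++ ones (2 ^ b).

Definition gi (a b nh i : nat) : list bool :=
  zeros ((2 ^ b + 2) * nh) ++ zeros (i - 1) ++ [true] ++ zeros (2 ^ (a - b) + 2 ^ b - i).

Definition g (a b nh i : nat) : list bool :=
  match i with O => g0 a b nh | _ => gi a b nh i end.

Definition cost (a b nh : nat) (s : list bool) : R :=
  sum_f_R0 (fun i => Rpower (INR (hamming s (g a b nh i))) (INR a / INR b)) (2 ^ (a - b)).

Definition target (a b nh : nat) : R :=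
  INR (2 ^ a + 2 ^ (a - b)) * Rpower (INR nh + 1) (INR a / INR b).

(* Let x and y be the numbers of ones of s in its first (2^b+1) nh positions and in
   the next nh.  Then d(s, g_0) = (2^b+1) nh - x + y + 2^b and d(s, g_i) = x + y + 1 for
   i >= 1, so with f(t) = t^p, c = nh + 1, u = nh - x + y and v = x + y - nh the cost is
   f(2^b c + u) + 2^(a-b) f(c + v).  Because (2^b)^(p-1) = 2^(a-b), the tangents of f at
   2^b c and at c have slopes in the ratio 2^(a-b), so convexity bounds the cost below by
   (2^a + 2^(a-b)) c^p plus a positive multiple of u + v = 2y >= 0, and strict convexity
   gives equality exactly when y = 0 and x = nh. *)

From Stdlib Require Import Reals List Lia Lra.
Import ListNotations.

Local Open Scope nat_scope.

Definition weight (l : list bool) : nat := count_occ Bool.bool_dec l true.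

Lemma weight_app (l1 l2 : list bool) : weight (l1 ++ l2) = weight l1 + weight l2.
Proof. apply count_occ_app. Qed.

Lemma weight_zeros (k : nat) : weight (zeros k) = 0.
Proof. apply count_occ_repeat_neq; discriminate. Qed.

Lemma weight_le_length (l : list bool) : weight l <= length l.
Proof. apply count_occ_bound. Qed.

Lemma weight_eq0 (l : list bool) : weight l = 0 <-> forall k, nth k l false = false.
Proof.
  unfold weight. rewrite <- count_occ_not_In. split.
  - intros Hnin k. destruct (nth k l false) eqn:Hk; [exfalso | reflexivity].
    destruct (Nat.lt_ge_cases k (length l)) as [Hlt | Hge].
    + apply Hnin. rewrite <- Hk. now apply nth_In.
    + now rewrite nth_overflow in Hk.
  - intros Hnth Hin. destruct (In_nth l true false Hin) as [k [_ Hk]].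
    now rewrite Hnth in Hk.
Qed.

Lemma hamming_app (l1 l2 t1 t2 : list bool) : length l1 = length t1 ->
  hamming (l1 ++ l2) (t1 ++ t2) = hamming l1 t1 + hamming l2 t2.
Proof.
  revert t1; induction l1 as [|x l1 IH]; intros [|y t1] Hlen; simpl in *; try lia.
  rewrite IH; lia.
Qed.

Lemma hamming_zeros (l : list bool) (N : nat) : length l <= N -> hamming l (zeros N) = weight l.
Proof.
  unfold weight. revert N; induction l as [|[] l IH]; intros [|N] Hlen;
    simpl in *; rewrite ?IH; lia.
Qed.

Lemma hamming_ones (l : list bool) (N : nat) : length l <= N ->
  hamming l (ones N) + weight l = length l.
Proof.
  unfold weight, ones. revert N; induction l as [|x l IH]; intros [|N] Hlen; simpl in *; try lia.
  specialize (IH N ltac:(lia)). destruct x; simpl; lia.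
Qed.

Lemma hamming_zeros_unit (k i : nat) : 1 <= i <= k ->
  hamming (zeros k) (zeros (i - 1) ++ [true] ++ zeros (k - i)) = 1.
Proof.
  intros Hi. replace k with (i - 1 + (1 + (k - i))) at 1 by lia.
  unfold zeros. rewrite !repeat_app, !hamming_app by (simpl; now rewrite ?repeat_length).
  rewrite !hamming_zeros by (rewrite repeat_length; lia).
  now rewrite !weight_zeros.
Qed.

Lemma split_zero_suffix (s : list bool) (n1 n2 k : nat) : length s = n1 + n2 + k ->
  (forall j, length s - k <= j < length s -> nth j s false = false) ->
  exists s1 s2, length s1 = n1 /\ length s2 = n2 /\ s = s1 ++ s2 ++ zeros k.
Proof.
  intros Hlen Hsuffix.
  exists (firstn n1 s), (firstn n2 (skipn n1 s)).
  rewrite !length_firstn, length_skipn. split; [lia | split; [lia |]].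
  assert (Htail : skipn (n2 + n1) s = zeros k).
  { apply nth_ext with false false; unfold zeros; rewrite length_skipn, ?repeat_length; [lia |].
    intros j Hj. rewrite nth_skipn, nth_repeat. apply Hsuffix. lia. }
  now rewrite <- Htail, <- skipn_skipn, !firstn_skipn.
Qed.

Section SplitString.

Variables (s1 s2 : list bool) (k : nat).

Lemma hamming_split_g0 (k1 k2 : nat) : k = k1 + k2 ->
  hamming (s1 ++ s2 ++ zeros k) (ones (length s1) ++ zeros (length s2) ++ zeros k1 ++ ones k2)
  = length s1 - weight s1 + weight s2 + k2.
Proof.
  intros ->. unfold zeros at 1. rewrite repeat_app.
  rewrite !hamming_app by (unfold zeros, ones; now rewrite repeat_length).
  pose proof (hamming_ones s1 (length s1) (le_n _)).
  pose proof (hamming_ones (zeros k2) k2 ltac:(unfold zeros; rewrite repeat_length; lia)).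
  rewrite !hamming_zeros, weight_zeros in * by (unfold zeros; rewrite ?repeat_length; lia).
  unfold zeros in *; rewrite repeat_length in *. lia.
Qed.

Lemma hamming_split_gi (n i : nat) : n = length s1 + length s2 -> 1 <= i <= k ->
  hamming (s1 ++ s2 ++ zeros k) (zeros n ++ zeros (i - 1) ++ [true] ++ zeros (k - i))
  = weight s1 + weight s2 + 1.
Proof.
  intros -> Hi. unfold zeros at 2. rewrite repeat_app, <- app_assoc.
  rewrite !hamming_app by (now rewrite repeat_length).
  rewrite !hamming_zeros, hamming_zeros_unit by lia. lia.
Qed.

Lemma support_in_prefix_iff (N : nat) :
  (forall j, in_hs (s1 ++ s2 ++ zeros k) (zeros N) j -> 1 <= j <= length s1)
  <-> weight s2 = 0.
Proof.
  unfold in_hs, zeros at 2. setoid_rewrite nth_repeat. rewrite weight_eq0. split.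
  - intros Hsupp i. destruct (nth i s2 false) eqn:Hi; [exfalso | reflexivity].
    assert (Hlt : i < length s2).
    { destruct (Nat.lt_ge_cases i (length s2)); [assumption|].
      now rewrite nth_overflow in Hi. }
    enough (1 <= length s1 + i + 1 <= length s1) by lia.
    apply Hsupp. split.
    + rewrite !length_app. lia.
    + replace (length s1 + i + 1 - 1) with (length s1 + i) by lia.
      rewrite app_nth2_plus, app_nth1, Hi by assumption. discriminate.
  - intros Hs2 j [Hj Hnz]. split; [lia|].
    destruct (Nat.le_gt_cases j (length s1)) as [|Hgt]; [assumption | exfalso].
    apply Hnz. replace (j - 1) with (length s1 + (j - 1 - length s1)) by lia.
    rewrite app_nth2_plus. destruct (Nat.lt_ge_cases (j - 1 - length s1) (length s2)).
    + rewrite app_nth1 by assumption. apply Hs2.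
    + rewrite app_nth2, nth_repeat by assumption. reflexivity.
Qed.

Lemma prefix_condition_iff (N n1 w : nat) :
  length s1 = n1 -> length (s1 ++ s2 ++ zeros k) <= N ->
  (forall j, in_hs (s1 ++ s2 ++ zeros k) (zeros N) j -> 1 <= j <= n1)
    /\ hamming (s1 ++ s2 ++ zeros k) (zeros N) = w
  <-> weight s2 = 0 /\ weight s1 = w.
Proof.
  intros <- HN.
  rewrite support_in_prefix_iff, hamming_zeros, !weight_app, weight_zeros by exact HN.
  lia.
Qed.

End SplitString.

Local Open Scope R_scope.

Lemma Rpower_tangent_lt (p u v : R) : 1 < p -> 0 < u -> 0 < v -> v <> u ->
  Rpower u p + p * Rpower u (p - 1) * (v - u) < Rpower v p.
Proof.
  intros Hp Hu Hv Hvu.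
  assert (Hderiv : forall x, 0 < x ->
            derivable_pt_lim (fun x => Rpower x p) x (p * Rpower x (p - 1)))
    by (intros; apply derivable_pt_lim_power; lra).
  destruct (Rlt_or_le u v) as [Huv | Hvu'].
  - destruct (MVT_cor2 _ _ u v Huv (fun c Hc => Hderiv c ltac:(lra))) as [c [Hmvt Hc]].
    assert (Rpower u (p - 1) < Rpower c (p - 1)) by (apply Rlt_Rpower_l; lra).
    assert (0 < p * ((Rpower c (p - 1) - Rpower u (p - 1)) * (v - u)))
      by (repeat apply Rmult_lt_0_compat; lra).
    lra.
  - destruct (MVT_cor2 _ _ v u ltac:(lra) (fun c Hc => Hderiv c ltac:(lra))) as [c [Hmvt Hc]].
    assert (Rpower c (p - 1) < Rpower u (p - 1)) by (apply Rlt_Rpower_l; lra).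
    assert (0 < p * ((Rpower u (p - 1) - Rpower c (p - 1)) * (u - v)))
      by (repeat apply Rmult_lt_0_compat; lra).
    lra.
Qed.

Lemma Rpower_tangent_le (p u v : R) : 1 < p -> 0 < u -> 0 < v ->
  Rpower u p + p * Rpower u (p - 1) * (v - u) <= Rpower v p.
Proof.
  intros Hp Hu Hv. destruct (Req_dec v u) as [-> | Hvu].
  - lra.
  - left. now apply Rpower_tangent_lt.
Qed.

Lemma Rpower_mul_pred (x p : R) : 0 < x -> Rpower x p = x * Rpower x (p - 1).
Proof.
  intros Hx. rewrite <- (Rpower_1 x Hx) at 2.
  rewrite <- Rpower_plus. f_equal. ring.
Qed.

Lemma Rpower_tangent_scaled (p Q c u : R) : 1 < p -> 0 < Q -> 0 < c -> 0 < Q * c + u ->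
  Q * Rpower Q (p - 1) * Rpower c p + p * Rpower Q (p - 1) * Rpower c (p - 1) * u
  <= Rpower (Q * c + u) p.
Proof.
  intros Hp HQ Hc Hu.
  assert (HQc : 0 < Q * c) by (apply Rmult_lt_0_compat; lra).
  pose proof (Rpower_tangent_le p (Q * c) (Q * c + u) Hp HQc Hu) as Htan.
  rewrite <- !Rpower_mult_distr, (Rpower_mul_pred Q p) in Htan by lra.
  replace (Q * c + u - Q * c) with u in Htan by ring. lra.
Qed.

Lemma Rpower_INR_pow2_ratio (a b : nat) : (1 <= b <= a)%nat ->
  Rpower (INR (2 ^ b)) (INR a / INR b - 1) = INR (2 ^ (a - b)).
Proof.
  intros Hab. assert (Hb : 0 < INR b) by (apply lt_0_INR; lia).
  rewrite !pow_INR, <- !Rpower_pow, Rpower_mult by (simpl; lra).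
  f_equal. rewrite minus_INR by lia. field. lra.
Qed.

Lemma one_lt_INR_ratio (a b : nat) : (1 <= b < a)%nat -> 1 < INR a / INR b.
Proof.
  intros Hab. assert (INR b < INR a) by (apply lt_INR; lia).
  assert (0 < INR b) by (apply lt_0_INR; lia).
  apply Rmult_lt_reg_r with (INR b); [lra|]. unfold Rdiv.
  rewrite Rmult_assoc, Rinv_l by lra. lra.
Qed.

Lemma sum_f_R0_const_tail (f : nat -> R) (K : R) (n : nat) :
  (forall i, (1 <= i <= n)%nat -> f i = K) -> sum_f_R0 f n = f 0%nat + INR n * K.
Proof.
  intros Hf. induction n as [|n IH]; simpl sum_f_R0.
  - simpl. ring.
  - rewrite IH by (intros i Hi; apply Hf; lia).
    rewrite (Hf (S n)), S_INR by lia. ring.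
Qed.

Section TwoDistances.

Variables (p : R) (q m nh : nat).
Hypotheses (Hp : 1 < p) (Hq : (1 <= q)%nat) (Hqm : Rpower (INR q) (p - 1) = INR m).

Lemma two_distances_sum_eq (x y : nat) : x = nh -> y = 0%nat ->
  Rpower (INR ((q + 1) * nh - x + y + q)) p + INR m * Rpower (INR (x + y + 1)) p
  = INR (q * m + m) * Rpower (INR nh + 1) p.
Proof.
  intros -> ->.
  replace (nh + 0 + 1)%nat with (nh + 1)%nat by lia.
  assert (HQ : 0 < INR q) by (apply lt_0_INR; lia).
  assert (Hc : 0 < INR nh + 1) by (pose proof (pos_INR nh); lra).
  replace ((q + 1) * nh - nh + 0 + q)%nat with (q * (nh + 1))%nat by lia.
  rewrite mult_INR, (plus_INR nh 1), <- Rpower_mult_distr, (Rpower_mul_pred (INR q)), Hqm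
    by (simpl INR; lra).
  rewrite !plus_INR, mult_INR. simpl INR. ring.
Qed.

Lemma two_distances_sum_gt (x y : nat) : (x <= (q + 1) * nh)%nat -> ~ (y = 0%nat /\ x = nh) ->
  INR (q * m + m) * Rpower (INR nh + 1) p
  < Rpower (INR ((q + 1) * nh - x + y + q)) p + INR m * Rpower (INR (x + y + 1)) p.
Proof.
  intros Hx Hxy.
  set (c := INR nh + 1).
  set (u := INR nh - INR x + INR y).
  set (v := INR x + INR y - INR nh).
  assert (HQ : 0 < INR q) by (apply lt_0_INR; lia).
  assert (Hc : 0 < c) by (unfold c; pose proof (pos_INR nh); lra).
  assert (HM : 0 < INR m) by (rewrite <- Hqm; apply exp_pos).
  assert (Hcp : 0 < Rpower c (p - 1)) by apply exp_pos.
  assert (Hfirst : INR ((q + 1) * nh - x + y + q) = INR q * c + u).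
  { unfold c, u. rewrite !plus_INR, minus_INR, mult_INR, plus_INR by exact Hx.
    simpl INR. ring. }
  assert (Hsecond : INR (x + y + 1) = c + v) by (unfold c, v; rewrite !plus_INR; simpl INR; ring).
  assert (Hu : 0 < INR q * c + u) by (rewrite <- Hfirst; apply lt_0_INR; lia).
  assert (Hv : 0 < c + v) by (rewrite <- Hsecond; apply lt_0_INR; lia).
  pose proof (Rpower_tangent_scaled p (INR q) c u Hp HQ Hc Hu) as Htan1.
  rewrite Hqm in Htan1.
  assert (Hslopes : p * INR m * Rpower c (p - 1) * u + p * INR m * Rpower c (p - 1) * v
                    = 2 * (p * INR m * Rpower c (p - 1) * INR y))
    by (replace v with (2 * INR y - u) by (unfold u, v; ring); ring).
  rewrite Hfirst, Hsecond, plus_INR, mult_INR.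
  destruct (Nat.eq_dec y 0) as [Hy | Hy].
  - assert (Hvc : c + v <> c).
    { unfold c, v. rewrite Hy. simpl INR. intro Heq.
      apply Hxy. split; [exact Hy|]. apply INR_eq. lra. }
    pose proof (Rpower_tangent_lt p c (c + v) Hp Hc Hv Hvc) as Htan2.
    assert (INR m * (Rpower c p + p * Rpower c (p - 1) * (c + v - c))
            < INR m * Rpower (c + v) p) by (apply Rmult_lt_compat_l; lra).
    rewrite Hy in Hslopes. simpl INR in Hslopes. lra.
  - pose proof (Rpower_tangent_le p c (c + v) Hp Hc Hv) as Htan2.
    assert (INR m * (Rpower c p + p * Rpower c (p - 1) * (c + v - c))
            <= INR m * Rpower (c + v) p) by (apply Rmult_le_compat_l; lra).
    assert (0 < p * INR m * Rpower c (p - 1) * INR y)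
      by (repeat apply Rmult_lt_0_compat; try lra; apply lt_0_INR; lia).
    lra.
Qed.

End TwoDistances.

Lemma cost_split (a b nh : nat) (s1 s2 : list bool) :
  length s1 = ((2 ^ b + 1) * nh)%nat -> length s2 = nh ->
  cost a b nh (s1 ++ s2 ++ zeros (2 ^ (a - b) + 2 ^ b))
  = Rpower (INR ((2 ^ b + 1) * nh - weight s1 + weight s2 + 2 ^ b)) (INR a / INR b)
    + INR (2 ^ (a - b)) * Rpower (INR (weight s1 + weight s2 + 1)) (INR a / INR b).
Proof.
  intros Hs1 Hs2. unfold cost.
  rewrite sum_f_R0_const_tail
    with (K := Rpower (INR (weight s1 + weight s2 + 1)) (INR a / INR b)).
  - unfold g, g0. rewrite <- Hs1, <- Hs2, hamming_split_g0 by reflexivity.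
    now rewrite Hs1.
  - intros [|i] Hi; [lia|]. unfold g, gi.
    rewrite hamming_split_gi by (lia || nia). reflexivity.
Qed.

Theorem claim3 (a b nh : nat) (s : list bool) :
  (1 <= b)%nat -> (b < a)%nat -> Nat.gcd a b = 1%nat -> (1 <= nh)%nat ->
  length s = bigN a b nh ->
  (forall j : nat, (bigN a b nh - (2 ^ (a - b) + 2 ^ b) <= j < bigN a b nh)%nat ->
     nth j s false = false) ->
  ( ((forall j, in_hs s (zeros (bigN a b nh)) j -> (1 <= j <= (2 ^ b + 1) * nh)%nat) /\
      hamming s (zeros (bigN a b nh)) = nh) ->
    cost a b nh s = target a b nh ) /\
  ( ~ ((forall j, in_hs s (zeros (bigN a b nh)) j -> (1 <= j <= (2 ^ b + 1) * nh)%nat) /\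
      hamming s (zeros (bigN a b nh)) = nh) ->
    cost a b nh s > target a b nh ).
Proof.
  intros Hb Hab _ Hnh Hlen Hsuffix.
  rewrite <- Hlen in Hsuffix.
  assert (HN : bigN a b nh = ((2 ^ b + 1) * nh + nh + (2 ^ (a - b) + 2 ^ b))%nat)
    by (unfold bigN; nia).
  rewrite HN in Hlen.
  destruct (split_zero_suffix s _ _ _ Hlen Hsuffix) as (s1 & s2 & Hs1 & Hs2 & ->).
  rewrite prefix_condition_iff by (exact Hs1 || rewrite Hlen, HN; lia).
  rewrite cost_split by assumption.
  unfold target.
  replace (2 ^ a)%nat with (2 ^ b * 2 ^ (a - b))%nat by (rewrite <- Nat.pow_add_r; f_equal; lia).
  pose proof (one_lt_INR_ratio a b ltac:(lia)) as Hp.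
  pose proof (Rpower_INR_pow2_ratio a b ltac:(lia)) as Hqm.
  assert (Hq : (1 <= 2 ^ b)%nat) by (apply Nat.neq_0_lt_0, Nat.pow_nonzero; lia).
  split.
  - intros [Hy Hx]. now apply two_distances_sum_eq.
  - intros Hxy. apply Rlt_gt, two_distances_sum_gt; try assumption.
    rewrite <- Hs1. apply weight_le_length.
Qed.
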